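(* Let $S$ be a numerical semigroup with minimal generators $a_1<a_2<\cdots<a_\nu$ ($\nu\ge 2$), multiplicity $\mu=a_1$ and conductor $c$, with $a_2>\frac{c+\mu}{3}$. Let $P=\{a_1,\dots,a_\nu\}$, $P_1=\{a\in P\setminus\{\mu\}: \tfrac13(c+\mu)<a<\tfrac12(c+\mu)\}$, $P_2=\{a\in P\setminus\{\mu\}: \tfrac12(c+\mu)\le a<\tfrac23(c+\mu)\}$, $q_i=|P_i|$, and let $\sigma$ be the maximal cardinality of an independent set of Apéry pairs. Then $$\frac{q_1(q_1+1)}{2}+\sigma\cdot\max\{q_1,q_2\}+\nu\ge\mu.$$
   Context: A numerical semigroup is a submonoid $S\subseteq\mathbb{N}$ with finite complement; $\nu$ is the number of minimal generators, $\mu$ the smallest one, $c$ the least integer with $c+\mathbb{N}\subseteq S$. $\mathrm{Ap}(S)=\{x\in S: x-\mu\notin S\}$. An Apéry pair is a pair $(a,b)\in P_1\times P_2$ with $a+b\in\mathrm{Ap}(S)$. A set $\{(a_i,b_i)\}_{i=1}^n$ of Apéry pairs is independent if $a_i\ne a_j$ and $b_i\ne b_j$ for all $i\ne j$. *)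

From mathcomp Require Import all_boot.
Set Implicit Arguments. Unset Strict Implicit. Unset Printing Implicit Defensive.

Definition numerical_semigroup (S : pred nat) : Prop :=
  S 0 /\ (forall x y, S x -> S y -> S (x + y)) /\
  exists N, forall n, N <= n -> S n.

Definition min_generator (S : pred nat) (a : nat) : Prop :=
  S a /\ 0 < a /\ ~ (exists x y, [/\ 0 < x, 0 < y, S x, S y & x + y = a]).

Definition is_conductor (S : pred nat) (c : nat) : Prop :=
  (forall n, c <= n -> S n) /\
  (forall c', (forall n, c' <= n -> S n) -> c <= c').

(* Apery set of S w.r.t. m: x in S with x - m not in S (x - m taken in Z). *)
Definition apery (S : pred nat) (m x : nat) : bool :=
  S x && ~~ ((m <= x) && S (x - m)).

Definition inP1 (mu c a : nat) : bool :=
  [&& a != mu, c + mu < 3 * a & 2 * a < c + mu].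
Definition inP2 (mu c a : nat) : bool :=
  [&& a != mu, c + mu <= 2 * a & 3 * a < 2 * (c + mu)].

Definition apery_pair (S : pred nat) (gens : seq nat) (mu c : nat)
    (p : nat * nat) : bool :=
  [&& p.1 \in gens, inP1 mu c p.1, p.2 \in gens, inP2 mu c p.2 &
      apery S mu (p.1 + p.2)].

Definition independent_apery (S : pred nat) (gens : seq nat) (mu c : nat)
    (s : seq (nat * nat)) : bool :=
  [&& all (apery_pair S gens mu c) s, uniq (map fst s) & uniq (map snd s)].

(* Every nonzero element w of Ap(S) lies below c + mu, and an induction on w,
   started by a_2 > (c + mu)/3, shows 3w > c + mu: summands of an Apéry element
   are Apéry elements.  Hence a nonzero Apéry element is either a minimal
   generator other than mu, or a sum a + b of minimal generators a <= b with
   a in P1 and b in P1 or P2, since a decomposable summand would be too large.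
   Sums within P1 take at most q1(q1+1)/2 values.  The pairs of P1 x P2 summing
   into Ap(S) are the edges of a bipartite graph with maximum matchings of size
   sigma; every edge meets a maximum matching, at most sigma^2 edges join two
   matched vertices, and, as there is no augmenting path of length 3, each
   matching edge meets at most max(q1, q2) - sigma edges with an unmatched end.
   So there are at most sigma * max(q1, q2) such pairs, and counting the mu
   elements of Ap(S) gives the bound. *)

From mathcomp Require Import all_boot zify.

Set Implicit Arguments.
Unset Strict Implicit.
Unset Printing Implicit Defensive.

Fixpoint pair_sums (s : seq nat) : seq nat :=
  if s is x :: s' then [seq x + y | y <- s] ++ pair_sums s' else [::].

Lemma size_pair_sums s : size (pair_sums s) = size s * (size s + 1) %/ 2.
Proof.
suff double : 2 * size (pair_sums s) = size s * (size s + 1) by rewrite -double mulKn.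
by elim: s => //= x s IH; rewrite size_cat size_map /=; nia.
Qed.

Lemma mem_pair_sums s a b : a \in s -> b \in s -> a + b \in pair_sums s.
Proof.
elim: s => // x s IH aS bS; rewrite !in_cons in aS bS.
rewrite -[pair_sums _]/([seq x + y | y <- x :: s] ++ pair_sums s) mem_cat.
case/predU1P: aS => [->|aS]; case/predU1P: bS => [->|bS].
- by rewrite (map_f (addn x)) ?mem_head.
- by rewrite (map_f (addn x)) // in_cons bS orbT.
- by rewrite addnC (map_f (addn x)) // in_cons aS orbT.
- by rewrite IH ?orbT.
Qed.

Lemma sorted_ltn_nth1_le (s : seq nat) a :
  sorted ltn s -> a \in s -> a != nth 0 s 0 -> nth 0 s 1 <= a.
Proof.
case: s => [|x [|y t]] //=; rewrite !inE => /andP [_ path_t].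
case/predU1P=> [-> | /predU1P [-> // | a_t]]; first by rewrite eqxx.
by rewrite ltnW // (allP (order_path_min ltn_trans path_t) a a_t).
Qed.

Lemma min_generatorVsum (S : pred nat) w : S w -> 0 < w ->
  min_generator S w \/ exists x y, [/\ 0 < x, 0 < y, S x, S y & x + y = w].
Proof.
move=> Sw w0; case: (boolP (has (fun x => S x && S (w - x)) (iota 1 w.-1))).
  case/hasP=> x; rewrite mem_iota => /andP [x0 xw] /andP [Sx Swx]; right.
  by exists x, (w - x); split => //; lia.
move/hasPn=> nosum; left; split=> //; split=> // -[x [y [x0 y0 Sx Sy xyw]]].
have /nosum : x \in iota 1 w.-1 by rewrite mem_iota; lia.
by rewrite Sx -xyw addKn Sy.
Qed.

Section Apery.

Variables (S : pred nat) (m c : nat).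
Hypothesis S_c : forall n, c <= n -> S n.

Lemma apery_lt_conductor w : apery S m w -> w < c + m.
Proof.
case/andP=> _; apply: contraR; rewrite -leqNgt => le_w.
by rewrite S_c ?andbT; lia.
Qed.

(* For each residue [r < m], the least element of [S] of the form [r + m k] is in the Apéry set. *)
Lemma apery_size_ge : 0 < m -> m <= size [seq w <- iota 0 (c + m) | apery S m w].
Proof.
move=> m0; set Ap := [seq w <- _ | _].
suff : {subset iota 0 m <= map (modn^~ m) Ap}.
  by move/(uniq_leq_size (iota_uniq 0 m)); rewrite size_iota size_map.
move=> r; rewrite mem_iota add0n /= => rm.
have r_S : exists k, S (r + m * k) by exists c; apply: S_c; nia.
case: (ex_minnP r_S) => k Sk k_min.
have ak : apery S m (r + m * k).
  rewrite /apery Sk /=; apply/negP => /andP [le Sm].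
  case: k Sk k_min le Sm => [|k] _ k_min le; first by rewrite muln0 addn0 leqNgt rm in le.
  rewrite mulnS addnCA addKn => /k_min; by rewrite ltnn.
apply/mapP; exists (r + m * k); last by rewrite addnC mulnC modnMDl modn_small.
by rewrite mem_filter ak mem_iota /= apery_lt_conductor.
Qed.

Hypotheses (S0 : S 0) (S_add : forall x y, S x -> S y -> S (x + y)).

Lemma apery_neq w : apery S m w -> w != m.
Proof. by apply: contraTneq => ->; rewrite /apery leqnn subnn S0 andbF. Qed.

Lemma apery_summand x y : S x -> S y -> apery S m (x + y) -> apery S m x.
Proof.
move=> Sx Sy /andP [_ xy_apery]; rewrite /apery Sx /=.
apply: contra xy_apery => /andP [mx Sxm]; rewrite (leq_trans mx (leq_addr _ _)) /=.
by rewrite addnC -addnBA // addnC S_add.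
Qed.

Lemma apery_min_generatorVsum w : apery S m w -> 0 < w ->
  min_generator S w \/
  exists x y, [/\ 0 < x, 0 < y, apery S m x, apery S m y & x + y = w].
Proof.
move=> w_apery w0; have /andP [Sw _] := w_apery.
have [| [x [y [x0 y0 Sx Sy xyw]]]] := min_generatorVsum Sw w0; first by left.
right; exists x, y; split=> //; first by apply: (apery_summand Sx Sy); rewrite xyw.
by apply: (apery_summand Sy Sx); rewrite addnC xyw.
Qed.

End Apery.

Lemma size_add_filter_notin (T : eqType) (s t : seq T) :
  uniq t -> {subset t <= s} -> size t + size [seq x <- s | x \notin t] <= size s.
Proof.
move=> uniq_t sub_ts; rewrite -(count_predC (mem t) s) size_filter leq_add2r.
by rewrite -size_filter; apply: uniq_leq_size => // x xt; rewrite mem_filter inE xt sub_ts.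
Qed.

Section MaximumMatching.

Variables (T1 T2 : eqType) (P : pred (T1 * T2)) (A : seq T1) (B : seq T2).

Definition edges := [seq p <- [seq (a, b) | a <- A, b <- B] | P p].

Definition matching (M : seq (T1 * T2)) :=
  [&& all [in edges] M, uniq (map fst M) & uniq (map snd M)].

Lemma mem_edges e : (e \in edges) = [&& P e, e.1 \in A & e.2 \in B].
Proof.
rewrite mem_filter; congr (_ && _); case: e => a b /=.
apply/allpairsP/andP => [[[x y] [/= xA yB [-> ->]]] // | [aA bB]].
by exists (a, b).
Qed.

Variable M : seq (T1 * T2).
Hypotheses (matchM : matching M) (maxM : forall M', matching M' -> size M' <= size M).

Let covered1 := map fst M.
Let covered2 := map snd M.
Let uncovered1 := [seq a <- A | a \notin covered1].
Let uncovered2 := [seq b <- B | b \notin covered2].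

Lemma matching_edge_covered e : e \in edges -> (e.1 \in covered1) || (e.2 \in covered2).
Proof.
move=> eE; apply/negPn/negP; rewrite negb_or => /andP [e1M e2M].
have /maxM : matching (e :: M).
  by case/and3P: matchM => ME u1 u2; rewrite /matching /= eE ME e1M e2M u1 u2.
by rewrite ltnn.
Qed.

(* [(x, p.2)], [p], [(p.1, y)] would be an augmenting path. *)
Lemma matching_no_augmenting_path3 p x y : p \in M ->
  (x, p.2) \in edges -> (p.1, y) \in edges -> x \notin covered1 -> y \notin covered2 -> False.
Proof.
move=> pM xE yE xM yM; case/and3P: matchM => ME u1 u2.
have permM := perm_to_rem pM; set R := rem p M in permM.
have perm1 := perm_map fst permM; have perm2 := perm_map snd permM.
have /maxM : matching ((x, p.2) :: (p.1, y) :: R).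
  rewrite /matching /= xE yE /=.
  have -> : all [in edges] R by apply/allP => q /mem_rem /(allP ME).
  move: u1 u2 xM yM; rewrite /covered1 /covered2.
  rewrite (perm_uniq perm1) (perm_uniq perm2) (perm_mem perm1) (perm_mem perm2) /=.
  rewrite !inE !negb_or => /andP [-> ->] /andP [-> ->] /andP [-> ->] /andP [yp2 ->].
  by rewrite eq_sym yp2.
by rewrite /= size_rem // prednK ?ltnn //; case: (M) pM.
Qed.

(* An edge with a single covered endpoint is charged to the matching edge there;
   by [matching_no_augmenting_path3] the edges charged to [p] all meet the same
   endpoint of [p]. *)
Let charged (p : T1 * T2) :=
  if has (fun a => (a, p.2) \in edges) uncovered1 then [seq (a, p.2) | a <- uncovered1]
  else [seq (p.1, b) | b <- uncovered2].

Lemma edges_sub_charged :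
  {subset edges <= [seq (a, b) | a <- covered1, b <- covered2] ++ flatten (map charged M)}.
Proof.
move=> [x y] eE; have := eE; rewrite mem_edges /= => /and3P [_ xA yB].
rewrite mem_cat; have [xM | xM] := boolP (x \in covered1).
  have [yM | yM] := boolP (y \in covered2); first by rewrite allpairs_f.
  case/mapP: xM => p pM xp; apply/orP; right; apply/flatten_mapP; exists p => //.
  rewrite /charged; case: hasP => [[a] | _].
    rewrite mem_filter => /andP [aM _] aE; have yE : (p.1, y) \in edges by rewrite -xp.
    by case: (matching_no_augmenting_path3 pM aE yE aM yM).
  by rewrite xp map_f // mem_filter yM.
have := matching_edge_covered eE; rewrite (negbTE xM) /= => /mapP [p pM yp].
apply/orP; right; apply/flatten_mapP; exists p => //.
have xU : x \in uncovered1 by rewrite mem_filter xM.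
rewrite /charged; case: hasP => [_ | []]; last by exists x; rewrite -?yp.
by rewrite yp map_f.
Qed.

Hypotheses (uniqA : uniq A) (uniqB : uniq B).

Lemma size_edges_max_matching : size edges <= size M * maxn (size A) (size B).
Proof.
case/and3P: matchM => ME u1 u2.
have edges_uniq : uniq edges.
  by rewrite filter_uniq // allpairs_uniq // => -[? ?] [? ?] _ _ [-> ->].
have sizeA : size M + size uncovered1 <= size A.
  rewrite -(size_map fst M) size_add_filter_notin // => _ /mapP [p pM ->].
  by have := allP ME p pM; rewrite mem_edges => /and3P [].
have sizeB : size M + size uncovered2 <= size B.
  rewrite -(size_map snd M) size_add_filter_notin // => _ /mapP [p pM ->].
  by have := allP ME p pM; rewrite mem_edges => /and3P [].
have size_charged :
    sumn (map (size \o charged) M) <= size M * maxn (size uncovered1) (size uncovered2).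
  elim: (M) => //= p M' IH; rewrite mulSn leq_add //.
  by rewrite /charged; case: ifP; rewrite size_map ?leq_maxl ?leq_maxr.
apply: leq_trans (uniq_leq_size edges_uniq edges_sub_charged) _.
rewrite size_cat size_allpairs !size_map size_flatten /shape -map_comp.
apply: leq_trans (leq_add (leqnn _) size_charged) _; rewrite -mulnDr leq_mul2l.
by apply/orP; right; lia.
Qed.

End MaximumMatching.

Lemma mem_behead_neq_head (T : eqType) (x0 : T) s x :
  x \in s -> x != nth x0 s 0 -> x \in behead s.
Proof. by case: s => //= y s; rewrite in_cons => /predU1P [->|]; rewrite ?eqxx. Qed.

Section SmallAperyElements.

Variables (S : pred nat) (mu c : nat).
Hypotheses (S0 : S 0) (S_add : forall x y, S x -> S y -> S (x + y)).
Hypothesis S_c : forall n, c <= n -> S n.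
Hypothesis generator_gt_third : forall a, min_generator S a -> a != mu -> c + mu < 3 * a.

Lemma apery_gt_third w : apery S mu w -> 0 < w -> c + mu < 3 * w.
Proof.
elim/ltn_ind: w => w IH w_apery w0.
have [w_gen | [x [y [x0 y0 x_apery y_apery xyw]]]] := apery_min_generatorVsum S_add w_apery w0.
  exact: generator_gt_third (apery_neq S0 w_apery).
have := IH x _ x_apery x0; have := IH y _ y_apery y0; lia.
Qed.

Lemma apery_min_generator w :
  apery S mu w -> 0 < w -> 3 * w < 2 * (c + mu) -> min_generator S w.
Proof.
move=> w_apery w0 small_w.
have [// | [x [y [x0 y0 x_apery y_apery xyw]]]] := apery_min_generatorVsum S_add w_apery w0.
have := apery_gt_third x_apery x0; have := apery_gt_third y_apery y0; lia.
Qed.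

Lemma apery_decomposition w : apery S mu w -> 0 < w ->
  min_generator S w /\ w != mu \/
  exists a b, [/\ min_generator S a, min_generator S b, a + b = w,
                  inP1 mu c a & inP1 mu c b || inP2 mu c b].
Proof.
move=> w_apery w0; have w_lt := apery_lt_conductor S_c w_apery.
have [w_gen | [x [y [x0 y0 x_apery y_apery xyw]]]] := apery_min_generatorVsum S_add w_apery w0.
  by left; rewrite (apery_neq S0 w_apery).
right; wlog xy : x y x0 y0 x_apery y_apery xyw / x <= y.
  move=> sym; case: (leqP x y) => [|/ltnW]; first exact: sym.
  by apply: sym; rewrite // addnC.
have x_large := apery_gt_third x_apery x0; have y_large := apery_gt_third y_apery y0.
exists x, y; split.
- by apply: apery_min_generator; rewrite //; lia.
- by apply: apery_min_generator; rewrite //; lia.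
- by [].
- by rewrite /inP1 (apery_neq S0 x_apery) x_large /=; lia.
- by rewrite /inP1 /inP2 (apery_neq S0 y_apery) y_large /=; case: leqP => /= _; lia.
Qed.

Variables (gens : seq nat).
Hypothesis gensP : forall a, a \in gens <-> min_generator S a.
Hypothesis mu_head : nth 0 gens 0 = mu.

Let P1 := [seq a <- gens | inP1 mu c a].
Let P2 := [seq b <- gens | inP2 mu c b].

Lemma apery_sub_generators_sums :
  {subset [seq w <- iota 0 (c + mu) | apery S mu w] <=
   0 :: behead gens ++ pair_sums P1 ++
   [seq p.1 + p.2 | p <- edges (apery_pair S gens mu c) P1 P2]}.
Proof.
move=> w; rewrite mem_filter => /andP [w_apery _].
rewrite in_cons !mem_cat; have [-> // | w0] := posnP w.
case: (apery_decomposition w_apery w0) => [[/gensP wG w_mu] | ].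
  by rewrite (mem_behead_neq_head (x0 := 0) wG) // mu_head.
move=> [a [b [/gensP aG /gensP bG ab_w a1 /orP [b1 | b2]]]]; subst w.
  by rewrite mem_pair_sums ?orbT // mem_filter ?a1 ?b1.
have ab_edge : (a, b) \in edges (apery_pair S gens mu c) P1 P2.
  by rewrite mem_edges /apery_pair /= !mem_filter aG bG a1 b2 w_apery.
by rewrite (map_f (fun p : nat * nat => p.1 + p.2) ab_edge) !orbT.
Qed.

End SmallAperyElements.

Lemma independent_apery_matching S gens mu c s :
  independent_apery S gens mu c s =
  matching (apery_pair S gens mu c)
    [seq a <- gens | inP1 mu c a] [seq b <- gens | inP2 mu c b] s.
Proof.
rewrite /independent_apery /matching; congr andb; apply: eq_all => p /=.
rewrite mem_edges !mem_filter; apply/idP/idP => [p_pair | /andP [] //].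
by rewrite p_pair; case/and5P: p_pair => -> -> -> -> _.
Qed.

Theorem corollary4p2 (S : pred nat) (gens : seq nat) (c sigma : nat) :
  numerical_semigroup S ->
  (forall a, a \in gens <-> min_generator S a) ->
  sorted ltn gens ->
  2 <= size gens ->
  is_conductor S c ->
  c + nth 0 gens 0 < 3 * nth 0 gens 1 ->
  (exists s, independent_apery S gens (nth 0 gens 0) c s /\ size s = sigma) ->
  (forall s, independent_apery S gens (nth 0 gens 0) c s -> size s <= sigma) ->
  let mu := nth 0 gens 0 in
  let q1 := count (inP1 mu c) gens in
  let q2 := count (inP2 mu c) gens in
  q1 * (q1 + 1) %/ 2 + sigma * maxn q1 q2 + size gens >= mu.
Proof.
move=> [S0 [S_add _]] gensP sorted_gens size_gens [S_c _] a2_large [s [s_indep <-]] s_max /=.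
set mu := nth 0 gens 0; set q1 := count _ gens; set q2 := count _ gens.
have /gensP [_ [mu0 _]] : mu \in gens by rewrite mem_nth // ltnW.
have generator_gt_third a : min_generator S a -> a != mu -> c + mu < 3 * a.
  by move=> /gensP aG a_mu; apply: leq_trans a2_large _; rewrite leq_mul2l sorted_ltn_nth1_le.
have uniq_gens : uniq gens := sorted_uniq ltn_trans ltnn sorted_gens.
set P1 := [seq a <- gens | inP1 mu c a]; set P2 := [seq b <- gens | inP2 mu c b].
have edges_le : size (edges (apery_pair S gens mu c) P1 P2) <= size s * maxn (size P1) (size P2).
  apply: size_edges_max_matching; rewrite ?filter_uniq //.
    by rewrite -independent_apery_matching.
  by move=> M; rewrite -independent_apery_matching => /s_max.
have apery_le := uniq_leq_size (filter_uniq _ (iota_uniq 0 (c + mu)))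
  (apery_sub_generators_sums S0 S_add S_c generator_gt_third gensP erefl).
have := apery_size_ge S_c mu0.
move: apery_le edges_le size_gens.
rewrite /= !size_cat size_behead size_map size_pair_sums !size_filter -/q1 -/q2.
set sums := q1 * (q1 + 1) %/ 2; set pairs := size s * maxn q1 q2; lia.
Qed.
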